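(* For all integers $3\le r\le n$, \[ \log p(n,r) \le \frac{1}{n-r+1}\binom{n}{r}\log\bigl(\mathrm{e}(n-r+1)\bigr). \]
   Context: $p(n,r)$ denotes the number of paving matroids of rank $r$ on the ground set $[n]=\{1,\dots,n\}$; a matroid of rank $r$ is paving if each of its circuits has cardinality at least $r$. $\log$ is the logarithm to base $2$ and $\mathrm{e}$ is Euler's number. *)

From mathcomp Require Import all_boot.
From Stdlib Require Import Reals.
Set Implicit Arguments. Unset Strict Implicit. Unset Printing Implicit Defensive.

Definition is_matroid (n : nat) (I : {set {set 'I_n}}) : bool :=
  [&& set0 \in I,
      [forall B in I, forall A : {set 'I_n}, (A \subset B) ==> (A \in I)] &
      [forall A in I, forall B in I,
         (#|A| < #|B|) ==> [exists x in B :\: A, (x |: A) \in I]]].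

Definition has_rank (n r : nat) (I : {set {set 'I_n}}) : bool :=
  [exists B in I, #|B| == r] && [forall A in I, #|A| <= r].

Definition is_circuit (n : nat) (I : {set {set 'I_n}}) (C : {set 'I_n}) : bool :=
  (C \notin I) && [forall x in C, (C :\ x) \in I].

Definition paving (n r : nat) (I : {set {set 'I_n}}) : bool :=
  [forall C : {set 'I_n}, is_circuit I C ==> (r <= #|C|)].

Definition p (n r : nat) : nat :=
  #|[set I : {set {set 'I_n}} | [&& is_matroid I, has_rank r I & paving r I]]|.

Definition log2 (x : R) : R := (ln x / ln 2)%R.

(* A paving matroid of rank r is determined by its dependent r-sets: smaller
   sets are independent and larger ones dependent.  The spans of the
   (r-1)-sets are the hyperplanes, and they partition the (r-1)-sets.  Fixing
   one (r-1)-set Z in each hyperplane H, the r-sets Z + e (e in H \ Z) form a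
   code from which every hyperplane, hence every dependent r-set, is
   recovered.  For r >= 3, H contains at least r |H \ Z| of the (r-1)-sets, so
   the code has at most k = C(n, r-1) / r members.  Thus p(n, r) is at most the
   number of families of at most k of the N = C(n, r) r-sets, which is at most
   (m+1)^N / m^(N-k) with m = n-r+1.  As k m <= N, taking logarithms and using
   ln (1 + 1/m) <= 1/m gives the bound. *)

From mathcomp Require Import all_boot zify.
From Stdlib Require Import Reals Lra.
(* Reals rebinds [^] in nat_scope to Nat.pow; restore ssrnat's [expn]. *)
From mathcomp Require Import ssrnat.
Set Implicit Arguments. Unset Strict Implicit. Unset Printing Implicit Defensive.

Lemma leq_mul_bin k f : 1 < k -> k.+1 * f <= 'C(k + f, k).
Proof.
case: k => [|[|j]] // _.
elim: f => [|f IH]; first by rewrite muln0.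
rewrite addnS binS.
case: f IH => [_|g IH]; first by rewrite addn0 binn binSn muln1 add1n.
have bin_ge : j.+3 <= 'C(j.+2 + g.+1, j.+1).
  apply: leq_trans (leq_bin2l _ (_ : j.+3 <= _)); last by lia.
  have : 0 < 'C(j.+2, j) by rewrite bin_gt0; lia.
  by rewrite binS binSn; lia.
lia.
Qed.

(* Weighting each subset S of X by m ^ (#|X| - #|S|), the weights sum to
   (m+1) ^ #|X| by the binomial theorem. *)
Lemma card_small_subsets (T : finType) (X : {set T}) k m : 0 < m ->
  #|[set S : {set T} | S \subset X & #|S| <= k]| * m ^ (#|X| - k) <= m.+1 ^ #|X|.
Proof.
move=> m_gt0; set N := #|X|.
rewrite -sum_nat_const.
apply: leq_trans (_ : \sum_(S : {set T} | S \subset X) m ^ (N - #|S|) <= _).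
  rewrite big_mkcond [X in _ <= X]big_mkcond /=; apply: leq_sum => S _.
  rewrite inE; case: (S \subset X) => //=; case: (leqP #|S| k) => // small.
  by apply: leq_pexp2l => //; lia.
rewrite (partition_big (fun S : {set T} => (inord #|S| : 'I_N.+1)) xpredT) //=.
rewrite -[m.+1]addn1 (expnDn m 1) /=.
apply: eq_leq; apply: eq_bigr => j _.
rewrite exp1n muln1 -(cards_draws X j) -sum_nat_const.
apply: congr_big => // S; last first.
  by case/andP => sX /eqP <-; rewrite inordK // ltnS subset_leq_card.
rewrite inE; case sX: (S \subset X) => //=.
have cardS : #|S| < N.+1 by rewrite ltnS subset_leq_card.
apply/eqP/eqP => [<-|card_j]; first by rewrite inordK.
by apply: val_inj; rewrite /= inordK.
Qed.

Lemma leq_card_bigcup (T I : finType) (P : pred I) (F : I -> {set T}) :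
  #|\bigcup_(i | P i) F i| <= \sum_(i | P i) #|F i|.
Proof.
apply: (big_ind2 (fun (U : {set T}) k => #|U| <= k)) => // [|U1 k1 U2 k2 le1 le2].
  by rewrite cards0.
by apply: leq_trans (leq_card_setU U1 U2) (leq_add le1 le2).
Qed.

(* For independent Y this is the closure of Y. *)
Definition span n (I : {set {set 'I_n}}) (Y : {set 'I_n}) : {set 'I_n} :=
  Y :|: [set e | e |: Y \notin I].

Definition ksets n k : {set {set 'I_n}} := [set A : {set 'I_n} | #|A| == k].

Definition span_rep n r (I : {set {set 'I_n}}) (Y : {set 'I_n}) : {set 'I_n} :=
  odflt Y [pick Z : {set 'I_n} | (#|Z| == r.-1) && (span I Z == span I Y)].

Definition span_reps n r (I : {set {set 'I_n}}) : {set {set 'I_n}} :=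
  [set span_rep r I Y | Y in ksets n r.-1].

Definition encode n r (I : {set {set 'I_n}}) : {set {set 'I_n}} :=
  \bigcup_(Z in span_reps r I) [set e |: Z | e in span I Z :\: Z].

Definition decode n r (S : {set {set 'I_n}}) : {set {set 'I_n}} :=
  [set A in ksets n r |
     [exists Y in ksets n r.-1, A \subset Y :|: [set e | e |: Y \in S]]].

Definition dep_ksets n r (I : {set {set 'I_n}}) : {set {set 'I_n}} :=
  [set A in ksets n r | A \notin I].

Lemma has_rank_dep n r (I : {set {set 'I_n}}) (A : {set 'I_n}) :
  has_rank r I -> r < #|A| -> A \notin I.
Proof.
case/andP=> _ /forallP rank_max lt_r_A; apply/negP => AI.
by move: (rank_max A); rewrite AI /= leqNgt lt_r_A.
Qed.

Section PavingMatroid.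

Variables (n r : nat) (I : {set {set 'I_n}}).
Hypotheses (matroidI : is_matroid I) (pavingI : paving r I) (r_gt0 : 0 < r).

Lemma matroid_augment (A B : {set 'I_n}) : A \in I -> B \in I -> #|A| < #|B| ->
  exists2 x, x \in B :\: A & x |: A \in I.
Proof.
case/and3P: matroidI => _ _ /forallP augment AI BI lt_AB.
move: (augment A); rewrite AI => /forallP /(_ B); rewrite BI lt_AB /=.
by case/existsP=> x /andP[]; exists x.
Qed.

Lemma paving_indep (A : {set 'I_n}) : #|A| < r -> A \in I.
Proof.
have [k lt_A_k] := ubnP #|A|; elim: k => // k IH in A lt_A_k * => lt_A_r.
apply/negPn/negP => AnI.
have circuitA : is_circuit I A.
  rewrite /is_circuit AnI; apply/forallP => x; apply/implyP => xA.
  have lt_Ax_A : #|A :\ x| < #|A| by rewrite (cardsD1 x A) xA.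
  by apply: IH; [apply: leq_trans lt_Ax_A _; rewrite -ltnS | apply: ltn_trans lt_A_r].
by move/forallP: pavingI => /(_ A) /implyP /(_ circuitA); rewrite leqNgt lt_A_r.
Qed.

Lemma span_dep (Y A : {set 'I_n}) : Y \in I -> A \subset span I Y -> #|Y| < #|A| ->
  A \notin I.
Proof.
move=> YI sAY lt_YA; apply/negP => AI.
have [x /setDP[xA xY] xYI] := matroid_augment YI AI lt_YA.
by move/subsetP: sAY => /(_ x xA); rewrite !inE (negbTE xY) xYI.
Qed.

Lemma span_subset (Y Y' : {set 'I_n}) : #|Y| = r.-1 -> #|Y'| = r.-1 ->
  Y' \subset span I Y -> span I Y \subset span I Y'.
Proof.
move=> cardY cardY' sY'Y; apply/subsetP => e eY.
rewrite !inE; case: (boolP (e \in Y')) => //= eY'.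
apply: (span_dep (Y := Y)); first by apply: paving_indep; lia.
  by rewrite subUset sub1set eY.
by rewrite cardsU1 eY'; lia.
Qed.

Lemma span_eq (Y Y' : {set 'I_n}) : #|Y| = r.-1 -> #|Y'| = r.-1 ->
  Y' \subset span I Y -> span I Y' = span I Y.
Proof.
move=> cardY cardY' sY'Y; have sYY' := span_subset cardY cardY' sY'Y.
apply/eqP; rewrite eqEsubset sYY' andbT.
exact: span_subset (subset_trans (subsetUl _ _) sYY').
Qed.

Lemma span_repP (Y : {set 'I_n}) : #|Y| = r.-1 ->
  #|span_rep r I Y| = r.-1 /\ span I (span_rep r I Y) = span I Y.
Proof.
move=> cardY; rewrite /span_rep; case: pickP => [Z /andP[/eqP -> /eqP ->] //|].
by move/(_ Y); rewrite cardY !eqxx.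
Qed.

Lemma span_rep_eq (Y1 Y2 : {set 'I_n}) : #|Y1| = r.-1 -> span I Y1 = span I Y2 ->
  span_rep r I Y1 = span_rep r I Y2.
Proof.
move=> cardY1 spanY12; rewrite /span_rep spanY12; case: pickP => // noZ.
by move: (noZ Y1); rewrite cardY1 spanY12 !eqxx.
Qed.

Lemma card_span_reps (Z : {set 'I_n}) : Z \in span_reps r I -> #|Z| = r.-1.
Proof. by case/imsetP=> Y; rewrite inE => /eqP /span_repP[cardZ _] ->. Qed.

Lemma encode_sub : encode r I \subset dep_ksets r I.
Proof.
apply/subsetP => X /bigcupP[Z ZR /imsetP[e]].
rewrite !inE => /andP[eZ eNI] ->.
rewrite cardsU1 eZ add1n (card_span_reps ZR) prednK // eqxx /=.
by rewrite (negbTE eZ) in eNI.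
Qed.

Lemma decode_encode : decode r (encode r I) = dep_ksets r I.
Proof.
apply/setP => A; rewrite !inE; case: eqP => //= cardA; apply/idP/idP.
- case/existsP=> Y /andP[]; rewrite inE => /eqP cardY sAY.
  apply: (span_dep (Y := Y)); first by apply: paving_indep; lia.
    apply: subset_trans sAY _; rewrite setUS //; apply/subsetP => e.
    by rewrite !inE => /(subsetP encode_sub); rewrite inE => /andP[].
  by rewrite cardY cardA; lia.
- move=> AnI.
  have /set0Pn[a aA] : A != set0 by rewrite -card_gt0 cardA.
  have cardY : #|A :\ a| = r.-1 by move: (cardsD1 a A); rewrite aA cardA; lia.
  have [cardZ spanZ] := span_repP cardY.
  set Z := span_rep r I (A :\ a) in cardZ spanZ *.
  have ZR : Z \in span_reps r I by apply: imset_f; rewrite inE cardY.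
  apply/existsP; exists Z; rewrite inE cardZ eqxx /=.
  apply/subsetP => b bA; rewrite !inE; case: (boolP (b \in Z)) => //= bZ.
  apply/bigcupP; exists Z => //; apply/imsetP; exists b => //.
  rewrite in_setD bZ spanZ !inE; case: (eqVneq b a) => [->|ba]; last by rewrite bA.
  by rewrite setD1K.
Qed.

Lemma span_rep_fibre (Z : {set 'I_n}) : Z \in span_reps r I ->
  [set Y in ksets n r.-1 | span_rep r I Y == Z] =
  [set Y : {set 'I_n} | Y \subset span I Z & #|Y| == r.-1].
Proof.
move=> ZR; have cardZ := card_span_reps ZR.
case/imsetP: ZR => Y0; rewrite inE => /eqP cardY0 defZ.
have [_ spanZ] := span_repP cardY0; rewrite -defZ in spanZ.
have repZ : span_rep r I Z = Z by rewrite defZ; apply: span_rep_eq; rewrite -?defZ.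
apply/setP => Y; rewrite !inE; case: (#|Y| =P r.-1) => [cardY|_]; rewrite ?andbF // andbT.
apply/eqP/idP => [<-|sYZ]; first by case: (span_repP cardY) => _ ->; apply: subsetUl.
by rewrite -repZ; apply: span_rep_eq => //; apply: span_eq.
Qed.

End PavingMatroid.

Lemma card_span_rep_fibre n r (I : {set {set 'I_n}}) (Z : {set 'I_n}) :
  is_matroid I -> paving r I -> 2 < r -> Z \in span_reps r I ->
  r * #|span I Z :\: Z| <= #|[set Y in ksets n r.-1 | span_rep r I Y == Z]|.
Proof.
move=> matI pavI r_gt2 ZR; have r_gt0 : 0 < r by lia.
rewrite span_rep_fibre // cards_draws.
have cardZ := card_span_reps ZR.
have -> : #|span I Z| = r.-1 + #|span I Z :\: Z|.
  by rewrite cardsD (setIidPr (subsetUl _ _)) -cardZ subnKC // subset_leq_card ?subsetUl.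
by rewrite -{1}(prednK r_gt0); apply: leq_mul_bin; lia.
Qed.

Lemma card_encode n r (I : {set {set 'I_n}}) :
  is_matroid I -> paving r I -> 2 < r -> r * #|encode r I| <= 'C(n, r.-1).
Proof.
move=> matI pavI r_gt2.
have card_code : #|encode r I| <= \sum_(Z in span_reps r I) #|span I Z :\: Z|.
  apply: leq_trans (leq_card_bigcup _ _) _.
  by apply: leq_sum => Z _; apply: leq_imset_card.
apply: leq_trans (_ : \sum_(Z in span_reps r I)
                        #|[set Y in ksets n r.-1 | span_rep r I Y == Z]| <= _).
  apply: leq_trans (leq_mul (leqnn r) card_code) _.
  by rewrite big_distrr; apply: leq_sum => Z ZR; apply: card_span_rep_fibre.
have -> : 'C(n, r.-1) = \sum_(Y in ksets n r.-1) 1.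
  by rewrite sum1_card card_draws card_ord.
rewrite [X in _ <= X](partition_big (span_rep r I) (mem (span_reps r I))) /=.
  by apply: eq_leq; apply: eq_bigr => Z _; rewrite -sum1_card; apply: eq_bigl => Y; rewrite !inE.
by move=> Y YR; apply: imset_f.
Qed.

Lemma dep_ksets_inj n r (I1 I2 : {set {set 'I_n}}) :
  has_rank r I1 -> paving r I1 -> has_rank r I2 -> paving r I2 ->
  dep_ksets r I1 = dep_ksets r I2 -> I1 = I2.
Proof.
move=> rank1 pav1 rank2 pav2 /setP eq_dep.
apply/setP => A; case: (ltngtP #|A| r) => cardA.
- by rewrite (paving_indep pav1) ?(paving_indep pav2).
- by rewrite (negbTE (has_rank_dep rank1 cardA)) (negbTE (has_rank_dep rank2 cardA)).
- by apply: negb_inj; move: (eq_dep A); rewrite !inE cardA eqxx.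
Qed.

Lemma p_card_bound n r : 2 < r ->
  p n r * (n - r + 1) ^ ('C(n, r) - 'C(n, r.-1) %/ r) <= (n - r + 1).+1 ^ 'C(n, r).
Proof.
move=> r_gt2; have r_gt0 : 0 < r by lia.
set P := [set I : {set {set 'I_n}} | [&& is_matroid I, has_rank r I & paving r I]].
set codes := [set S : {set {set 'I_n}} |
                S \subset ksets n r & #|S| <= 'C(n, r.-1) %/ r].
have card_ksets : #|ksets n r| = 'C(n, r) by rewrite card_draws card_ord.
have p_le_codes : p n r <= #|codes|.
  rewrite /p -/P -(card_in_imset (f := @dep_ksets n r)); last first.
    move=> I1 I2; rewrite !inE => /and3P[_ rank1 pav1] /and3P[_ rank2 pav2].
    exact: dep_ksets_inj.
  apply: leq_trans (leq_imset_card (@decode n r) codes).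
  apply/subset_leq_card/subsetP => D /imsetP[I]; rewrite inE => /and3P[matI _ pavI] ->.
  rewrite -decode_encode //; apply: imset_f; rewrite inE; apply/andP; split.
    by apply: subset_trans (encode_sub I r_gt0) _; apply/subsetP => A; rewrite inE => /andP[].
  by rewrite leq_divRL // mulnC card_encode.
apply: leq_trans (leq_mul p_le_codes (leqnn _)) _.
by rewrite -card_ksets; apply: card_small_subsets; rewrite addn1.
Qed.

Lemma bin_pred_div_mul n r : 0 < r -> r <= n ->
  'C(n, r.-1) %/ r * (n - r + 1) <= 'C(n, r).
Proof.
move=> r_gt0 r_le_n.
have bin_pred : r * 'C(n, r) = (n - r + 1) * 'C(n, r.-1).
  by have := mul_bin_left n r.-1; rewrite prednK // => ->; congr (_ * _); lia.
rewrite -(leq_pmul2l r_gt0) bin_pred mulnA [r * _]mulnC [X in _ <= X]mulnC.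
exact: leq_mul (leq_divM _ _) (leqnn _).
Qed.

Lemma INR_expn m k : INR (m ^ k) = (INR m ^ k)%R.
Proof. by elim: k => // k IH; rewrite expnS mult_INR IH. Qed.

Section RealEstimates.
Local Open Scope R_scope.

Lemma ln_le x y : 0 < x -> x <= y -> ln x <= ln y.
Proof.
move=> x_gt0 /Rle_lt_or_eq_dec[lt_xy|<-]; last exact: Rle_refl.
by left; apply: ln_increasing.
Qed.

Lemma ln_add1_le x : 0 < x -> ln (x + 1) <= ln x + / x.
Proof.
move=> x_gt0; have inv_gt0 : 0 < / x by apply: Rinv_0_lt_compat.
have -> : x + 1 = x * (1 + / x) by field; lra.
rewrite ln_mult; try lra.
suff : ln (1 + / x) <= / x by lra.
by rewrite -{2}(ln_exp (/ x)); apply: ln_le; [lra | apply: exp_ineq1_le].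
Qed.

Lemma ln_card_bound (c m N k : nat) : (0 < m)%N -> (k * m <= N)%N ->
  (c * m ^ (N - k) <= m.+1 ^ N)%N ->
  ln (INR c) <= INR N / INR m * (1 + ln (INR m)).
Proof.
move=> m_gt0 km_le_N bound.
have m_ge1 : 1 <= INR m by apply: (le_INR 1); apply/leP.
have N_ge0 := pos_INR N.
have lnm_ge0 : 0 <= ln (INR m) by rewrite -ln_1; apply: ln_le; lra.
have k_le : INR k <= INR N / INR m.
  have := le_INR _ _ (leP km_le_N); rewrite mult_INR => kmN.
  apply: (Rmult_le_reg_r (INR m)); first lra.
  by rewrite /Rdiv Rmult_assoc Rinv_l; lra.
have Nm_ge0 : 0 <= INR N / INR m by apply: Rle_trans (pos_INR k) k_le.
case: c bound => [_|c bound].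
  (* [ln] is 0 outside the positive reals. *)
  have -> : ln (INR 0) = 0 by rewrite /ln; case: Rlt_dec => // lt00; case: (Rlt_irrefl _ lt00).
  by apply: Rmult_le_pos; lra.
have ln_bound : ln (INR c.+1) + INR (N - k) * ln (INR m) <= INR N * ln (INR m + 1).
  have bound_R := le_INR _ _ (leP bound).
  rewrite !mult_INR !INR_expn (S_INR m) in bound_R.
  have c_gt0 : 0 < INR c.+1 by apply: lt_0_INR; apply/ltP.
  rewrite -!ln_pow -?ln_mult; try lra; try by apply: pow_lt; lra.
  by apply: ln_le => //; apply: Rmult_lt_0_compat => //; apply: pow_lt; lra.
have k_le_N : (k <= N)%N by apply: leq_trans km_le_N; rewrite leq_pmulr.
rewrite minus_INR in ln_bound; last exact/leP.
have := Rmult_le_compat_l _ _ _ N_ge0 (ln_add1_le (x := INR m) ltac:(lra)).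
have := Rmult_le_compat_r _ _ _ lnm_ge0 k_le.
rewrite /Rdiv; lra.
Qed.

Lemma log2_card_bound (c m N k : nat) : (0 < m)%N -> (k * m <= N)%N ->
  (c * m ^ (N - k) <= m.+1 ^ N)%N ->
  log2 (INR c) <= / INR m * INR N * log2 (exp 1 * INR m).
Proof.
move=> m_gt0 km_le_N bound.
have m_gt0R : 0 < INR m by apply: lt_0_INR; apply/ltP.
have ln2_gt0 : 0 < ln 2 by rewrite -ln_1; apply: ln_increasing; lra.
rewrite /log2 ln_mult ?ln_exp //; last exact: exp_pos.
have -> : / INR m * INR N * ((1 + ln (INR m)) / ln 2) =
          INR N / INR m * (1 + ln (INR m)) / ln 2 by field; lra.
apply: Rmult_le_compat_r; first by left; apply: Rinv_0_lt_compat.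
exact: ln_card_bound bound.
Qed.

End RealEstimates.

Theorem theorem1p4 (n r : nat) :
  (3 <= r)%N -> (r <= n)%N ->
  (log2 (INR (p n r)) <=
     / INR (n - r + 1) * INR 'C(n, r) * log2 (exp 1 * INR (n - r + 1)))%R.
Proof.
move=> r_ge3 r_le_n.
apply: (@log2_card_bound _ _ _ ('C(n, r.-1) %/ r)).
- by rewrite addn1.
- by apply: bin_pred_div_mul => //; apply: ltnW (ltnW r_ge3).
- exact: p_card_bound.
Qed.
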